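(* Given $a,b\in\ell_\infty$, there is a continuous symmetric bilinear form $B$ on $\ell_1$ such that for every $z_1\in\ell_1''$ and every $z_2\in c_0^\perp\subseteq\ell_1''$, $$\tilde B(z_1,z_2)=z_1(a)\,z_2(b).$$
   Context: $\ell_1''=\ell_\infty'$, and $c_0^\perp\subseteq\ell_1''$ is the annihilator of $c_0\subseteq\ell_\infty$; one has $\ell_1''=\ell_1\oplus c_0^\perp$. For a continuous bilinear form $B$ on $\ell_1$, its canonical (Aron–Berner) extension is $\tilde B(z_1,z_2)=\lim_{\alpha}\lim_{\beta}B(x_\alpha,y_\beta)$, where $(x_\alpha),(y_\beta)\subseteq\ell_1$ are nets weak-star converging to $z_1$ and $z_2$ respectively (the limit in the second variable taken first). *)

From Stdlib Require Import Reals.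
From Coquelicot Require Import Coquelicot.
Open Scope R_scope.

Definition is_l1 (x : nat -> R) : Prop := ex_series (fun n => Rabs (x n)).
Definition is_linf (a : nat -> R) : Prop := exists M, forall n, Rabs (a n) <= M.
Definition is_c0 (a : nat -> R) : Prop := is_lim_seq a 0.

Definition norm1 (x : nat -> R) : R := Series (fun n => Rabs (x n)).

Definition pair (x a : nat -> R) : R := Series (fun n => x n * a n).

(* Elements of l1'' = (l_infinity)': continuous linear functionals on l_infinity
   (represented as functions on nat -> R; only their values on l_infinity matter). *)
Definition is_bidual (z : (nat -> R) -> R) : Prop :=
  (forall a b, is_linf a -> is_linf b -> z (fun n => a n + b n) = z a + z b) /\
  (forall c a, is_linf a -> z (fun n => c * a n) = c * z a) /\
  (exists C, forall a M, (forall n, Rabs (a n) <= M) -> Rabs (z a) <= C * M).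

Definition in_c0_perp (z : (nat -> R) -> R) : Prop :=
  is_bidual z /\ forall a, is_c0 a -> z a = 0.

Definition cont_sym_bilinear (B : (nat -> R) -> (nat -> R) -> R) : Prop :=
  (forall x1 x2 y, is_l1 x1 -> is_l1 x2 -> is_l1 y ->
     B (fun n => x1 n + x2 n) y = B x1 y + B x2 y) /\
  (forall c x y, is_l1 x -> is_l1 y -> B (fun n => c * x n) y = c * B x y) /\
  (forall x y1 y2, is_l1 x -> is_l1 y1 -> is_l1 y2 ->
     B x (fun n => y1 n + y2 n) = B x y1 + B x y2) /\
  (forall c x y, is_l1 x -> is_l1 y -> B x (fun n => c * y n) = c * B x y) /\
  (forall x y, is_l1 x -> is_l1 y -> B x y = B y x) /\
  (exists C, forall x y, is_l1 x -> is_l1 y -> Rabs (B x y) <= C * norm1 x * norm1 y).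

Definition directed {I : Type} (le : I -> I -> Prop) : Prop :=
  inhabited I /\
  (forall i, le i i) /\
  (forall i j k, le i j -> le j k -> le i k) /\
  (forall i j, exists k, le i k /\ le j k).

Definition net_lim {I : Type} (le : I -> I -> Prop) (f : I -> R) (l : R) : Prop :=
  forall eps, 0 < eps -> exists i0, forall i, le i0 i -> Rabs (f i - l) < eps.

(* a net in l1 converging weak-star (i.e. sigma(l1'', l_infinity)) to z in l1'' *)
Definition net_wstar {I : Type} (le : I -> I -> Prop) (x : I -> nat -> R)
  (z : (nat -> R) -> R) : Prop :=
  (forall i, is_l1 (x i)) /\
  forall a, is_linf a -> net_lim le (fun i => pair (x i) a) (z a).

(* Aron-Berner extension: AB_ext B z1 z2 v  means  ~B(z1,z2) = v, i.e. for all
   nets x_alpha ->w* z1, y_beta ->w* z2 in l1, lim_alpha lim_beta B(x_alpha,y_beta)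
   exists and equals v (inner limit in the second variable taken first). *)
Definition AB_ext (B : (nat -> R) -> (nat -> R) -> R)
  (z1 z2 : (nat -> R) -> R) (v : R) : Prop :=
  forall (I J : Type) (leI : I -> I -> Prop) (leJ : J -> J -> Prop)
    (x : I -> nat -> R) (y : J -> nat -> R),
    directed leI -> directed leJ -> net_wstar leI x z1 -> net_wstar leJ y z2 ->
    exists g : I -> R,
      (forall i, net_lim leJ (fun j => B (x i) (y j)) (g i)) /\ net_lim leI g v.

(* The form is B(x,y) = sum_n y_n k_x(n) with kernel
   k_x(n) = b_n sum_(m<=n) x_m a_m + a_n sum_(m>n) x_m b_m, that is
   B(x,y) = sum_(m<=n) x_m a_m y_n b_n + sum_(m>n) x_m b_m y_n a_n, and Abel
   summation shows that it is symmetric.  The kernel k_x differs from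
   <x,a> b by a null sequence, so every z2 in c0^perp gives
   z2(k_x) = <x,a> z2(b).  Hence the inner limit along y_beta -> z2 is
   <x_alpha,a> z2(b), and the outer limit along x_alpha -> z1 is z1(a) z2(b). *)

From Stdlib Require Import Reals Lra FunctionalExtensionality.
From Coquelicot Require Import Coquelicot.
Open Scope R_scope.

Definition bounded_by (M : R) (c : nat -> R) : Prop := forall n, Rabs (c n) <= M.

Definition tail (u : nat -> R) (n : nat) : R := Series u - sum_n u n.

Lemma bounded_by_scal k M c : bounded_by M c -> bounded_by (Rabs k * M) (fun n => k * c n).
Proof.
  intros Hc n. rewrite Rabs_mult. apply Rmult_le_compat_l; [apply Rabs_pos | apply Hc].
Qed.

Lemma bounded_by_minus M N c d :
  bounded_by M c -> bounded_by N d -> bounded_by (M + N) (fun n => c n - d n).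
Proof.
  intros Hc Hd n. unfold Rminus. eapply Rle_trans; [apply Rabs_triang|].
  rewrite Rabs_Ropp. apply Rplus_le_compat; auto.
Qed.

Lemma sum_n_0 (u : nat -> R) : sum_n u 0 = u 0%nat.
Proof. exact (sum_O u). Qed.

Lemma sum_n_S (u : nat -> R) n : sum_n u (S n) = sum_n u n + u (S n).
Proof. exact (sum_Sn u n). Qed.

Lemma sum_n_Rabs_le (u : nat -> R) n :
  Rabs (sum_n u n) <= sum_n (fun k => Rabs (u k)) n.
Proof. apply (norm_sum_n_m u 0 n). Qed.

Lemma sum_n_Rabs_le_norm1 u n : is_l1 u -> sum_n (fun k => Rabs (u k)) n <= norm1 u.
Proof.
  intros Hu. apply is_lim_seq_incr_compare; [apply (Series_correct _ Hu)|].
  intros m. rewrite sum_n_S. pose proof (Rabs_pos (u (S m))). lra.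
Qed.

Lemma sum_n_bounded u : is_l1 u -> bounded_by (norm1 u) (sum_n u).
Proof. intros Hu n. eapply Rle_trans; [apply sum_n_Rabs_le | apply sum_n_Rabs_le_norm1, Hu]. Qed.

Lemma is_l1_bounded u : is_l1 u -> bounded_by (norm1 u) u.
Proof.
  intros Hu [|n]; [rewrite <- sum_n_0; apply sum_n_bounded, Hu|].
  eapply Rle_trans; [|apply (sum_n_Rabs_le_norm1 u (S n) Hu)].
  rewrite sum_n_S.
  pose proof (Rle_trans _ _ _ (Rabs_pos _) (sum_n_Rabs_le u n)). lra.
Qed.

Lemma tail_bounded u : is_l1 u -> bounded_by (2 * norm1 u) (tail u).
Proof.
  intros Hu n. unfold tail, Rminus. eapply Rle_trans; [apply Rabs_triang|].
  rewrite Rabs_Ropp.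
  assert (HS : Rabs (Series u) <= norm1 u) by apply (Series_Rabs u Hu).
  pose proof (sum_n_bounded u Hu n). lra.
Qed.

Lemma is_lim_seq_sum_n u : is_l1 u -> is_lim_seq (sum_n u) (Series u).
Proof. intros Hu. apply Series_correct, ex_series_Rabs, Hu. Qed.

Lemma Series_eq_lim_sum_n (u : nat -> R) (l : R) : is_lim_seq (sum_n u) l -> Series u = l.
Proof. intros Hl. apply is_series_unique, Hl. Qed.

Lemma is_lim_seq_tail u : is_l1 u -> is_lim_seq (tail u) 0.
Proof.
  intros Hu. replace 0 with (Series u - Series u) by ring.
  apply is_lim_seq_minus'; [apply is_lim_seq_const | apply is_lim_seq_sum_n, Hu].
Qed.

Lemma is_l1_le u v : (forall n, Rabs (u n) <= v n) -> ex_series v -> is_l1 u.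
Proof.
  intros Huv Hv. apply (@ex_series_le R_AbsRing R_CompleteNormedModule _ v); [|exact Hv].
  intros n. change (Rabs (Rabs (u n)) <= v n). rewrite Rabs_Rabsolu. apply Huv.
Qed.

Lemma is_l1_mult_bounded u c M : is_l1 u -> bounded_by M c -> is_l1 (fun n => u n * c n).
Proof.
  intros Hu Hc. apply (is_l1_le _ (fun n => Rabs (u n) * M)); [|apply ex_series_scal_r, Hu].
  intros n. rewrite Rabs_mult. apply Rmult_le_compat_l; [apply Rabs_pos | apply Hc].
Qed.

Lemma norm1_mult_bounded_le u c M : is_l1 u -> bounded_by M c ->
  norm1 (fun n => u n * c n) <= M * norm1 u.
Proof.
  intros Hu Hc. unfold norm1. rewrite Rmult_comm, <- Series_scal_r.
  apply Series_le; [|apply ex_series_scal_r, Hu].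
  intros n. split; [apply Rabs_pos|]. rewrite Rabs_mult.
  apply Rmult_le_compat_l; [apply Rabs_pos | apply Hc].
Qed.

Lemma is_l1_plus u v : is_l1 u -> is_l1 v -> is_l1 (fun n => u n + v n).
Proof.
  intros Hu Hv. apply (is_l1_le _ (fun n => Rabs (u n) + Rabs (v n))).
  - intros n. apply Rabs_triang.
  - apply (ex_series_plus (fun n => Rabs (u n)) (fun n => Rabs (v n)) Hu Hv).
Qed.

Lemma is_l1_scal k u : is_l1 u -> is_l1 (fun n => k * u n).
Proof.
  intros Hu. apply (is_l1_le _ (fun n => Rabs (u n) * Rabs k)).
  - intros n. rewrite Rabs_mult. lra.
  - apply ex_series_scal_r, Hu.
Qed.

Lemma is_lim_seq_bounded_mult_0 M c u :
  bounded_by M c -> is_lim_seq u 0 -> is_lim_seq (fun n => c n * u n) 0.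
Proof.
  intros Hc Hu. apply is_lim_seq_abs_0.
  apply (is_lim_seq_le_le (fun _ => 0) _ (fun n => M * Rabs (u n))).
  - intros n. split; [apply Rabs_pos|]. rewrite Rabs_mult.
    apply Rmult_le_compat_r; [apply Rabs_pos | apply Hc].
  - apply is_lim_seq_const.
  - replace 0 with (M * 0) by ring.
    apply is_lim_seq_mult'; [apply is_lim_seq_const | apply (is_lim_seq_abs_0 u), Hu].
Qed.

(* Stated at type [R] rather than at the carrier of [R_AbelianMonoid], so that [ring] applies. *)
Lemma sum_n_abel (u v : nat -> R) (c : R) N :
  sum_n (fun n => v n * sum_n u n) N =
  sum_n (fun n => u n * (c - sum_n v n)) N - sum_n u N * (c - sum_n v N)
  + sum_n (fun n => u n * v n) N :> R.
Proof.
  induction N as [|N IHN].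
  - rewrite !sum_n_0. ring.
  - rewrite !sum_n_S, IHN. ring.
Qed.

Lemma Series_abel u v : is_l1 u -> is_l1 v ->
  Series (fun n => v n * sum_n u n) =
  Series (fun n => u n * tail v n) + Series (fun n => u n * v n).
Proof.
  intros Hu Hv.
  pose proof (is_l1_mult_bounded _ _ _ Hu (tail_bounded v Hv)) as Hut.
  pose proof (is_l1_mult_bounded _ _ _ Hu (is_l1_bounded v Hv)) as Huv.
  apply Series_eq_lim_sum_n.
  apply (is_lim_seq_ext (fun N => sum_n (fun n => u n * tail v n) N - sum_n u N * tail v N
                                   + sum_n (fun n => u n * v n) N)).
  { intros N. symmetry. apply sum_n_abel. }
  replace (Series (fun n => u n * tail v n) + Series (fun n => u n * v n))
    with (Series (fun n => u n * tail v n) - Series u * 0 + Series (fun n => u n * v n)) by ring.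
  apply is_lim_seq_plus'; [apply is_lim_seq_minus'|apply is_lim_seq_sum_n, Huv].
  - apply is_lim_seq_sum_n, Hut.
  - apply is_lim_seq_mult'; [apply is_lim_seq_sum_n, Hu | apply is_lim_seq_tail, Hv].
Qed.

Lemma pair_plus y1 y2 k M : is_l1 y1 -> is_l1 y2 -> bounded_by M k ->
  pair (fun n => y1 n + y2 n) k = pair y1 k + pair y2 k.
Proof.
  intros H1 H2 Hk. unfold pair.
  rewrite (Series_ext _ (fun n => y1 n * k n + y2 n * k n)) by (intros; ring).
  apply Series_plus; apply ex_series_Rabs; eapply is_l1_mult_bounded; eauto.
Qed.

Lemma pair_scal c y k : pair (fun n => c * y n) k = c * pair y k.
Proof. unfold pair. rewrite <- Series_scal_l. apply Series_ext. intros; ring. Qed.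

Lemma Rabs_pair_le y k M : is_l1 y -> bounded_by M k -> Rabs (pair y k) <= M * norm1 y.
Proof.
  intros Hy Hk. eapply Rle_trans; [apply Series_Rabs|apply norm1_mult_bounded_le; auto].
  eapply is_l1_mult_bounded; eauto.
Qed.

Lemma c0_perp_eval z k c b Mk Mb : in_c0_perp z ->
  bounded_by Mk k -> bounded_by Mb b -> is_c0 (fun n => k n - c * b n) ->
  z k = c * z b.
Proof.
  intros [[Hadd [Hscal _]] Hc0] Hk Hb Hkb.
  pose proof (bounded_by_scal c Mb b Hb) as Hcb.
  replace k with (fun n => c * b n + (k n - c * b n))
    by (apply functional_extensionality; intros; ring).
  rewrite Hadd, Hscal, (Hc0 _ Hkb).
  - ring.
  - exists Mb. exact Hb.
  - exists (Rabs c * Mb). exact Hcb.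
  - exists (Mk + Rabs c * Mb). apply bounded_by_minus; auto.
Qed.

Lemma net_lim_scal_r {I : Type} (le : I -> I -> Prop) f l c :
  net_lim le f l -> net_lim le (fun i => f i * c) (l * c).
Proof.
  intros Hf eps Heps. pose proof (Rabs_pos c).
  destruct (Hf (eps / (Rabs c + 1))) as [i0 Hi0]; [apply Rdiv_lt_0_compat; lra|].
  exists i0. intros i Hi. specialize (Hi0 i Hi).
  replace (f i * c - l * c) with ((f i - l) * c) by ring. rewrite Rabs_mult.
  apply (Rle_lt_trans _ (eps / (Rabs c + 1) * Rabs c)).
  - apply Rmult_le_compat_r; lra.
  - apply (Rmult_lt_reg_r (Rabs c + 1)); [lra|].
    field_simplify; [nra | lra].
Qed.

Section Form.

Variables (a b : nat -> R) (Ma Mb : R).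
Hypotheses (Ha : bounded_by Ma a) (Hb : bounded_by Mb b).

Definition ab_kernel (x : nat -> R) (n : nat) : R :=
  b n * sum_n (fun m => x m * a m) n + a n * tail (fun m => x m * b m) n.

Definition ab_form (x y : nat -> R) : R := pair y (ab_kernel x).

Lemma ab_kernel_bounded x : is_l1 x -> bounded_by (3 * Ma * Mb * norm1 x) (ab_kernel x).
Proof.
  intros Hx n. unfold ab_kernel.
  pose proof (norm1_mult_bounded_le x a Ma Hx Ha).
  pose proof (norm1_mult_bounded_le x b Mb Hx Hb).
  pose proof (sum_n_bounded _ (is_l1_mult_bounded x a Ma Hx Ha) n).
  pose proof (tail_bounded _ (is_l1_mult_bounded x b Mb Hx Hb) n).
  eapply Rle_trans; [apply Rabs_triang|]. rewrite !Rabs_mult.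
  apply (Rle_trans _ (Mb * (Ma * norm1 x) + Ma * (2 * (Mb * norm1 x)))); [|lra].
  apply Rplus_le_compat; apply Rmult_le_compat; auto using Rabs_pos; lra.
Qed.

Lemma ab_kernel_sub_is_c0 x : is_l1 x -> is_c0 (fun n => ab_kernel x n - pair x a * b n).
Proof.
  intros Hx. pose proof (is_l1_mult_bounded x a Ma Hx Ha) as Hxa.
  pose proof (is_l1_mult_bounded x b Mb Hx Hb) as Hxb.
  apply (is_lim_seq_ext (fun n => a n * tail (fun m => x m * b m) n
                                  - b n * tail (fun m => x m * a m) n)).
  { intros n. unfold ab_kernel, tail, pair. ring. }
  replace 0 with (0 - 0) by ring.
  apply is_lim_seq_minus'; eapply is_lim_seq_bounded_mult_0; eauto using is_lim_seq_tail.
Qed.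

Lemma ab_form_expand x y : is_l1 x -> is_l1 y ->
  ab_form x y =
  Series (fun n => (x n * a n) * tail (fun m => y m * b m) n)
  + Series (fun n => (x n * a n) * (y n * b n))
  + Series (fun n => (y n * a n) * tail (fun m => x m * b m) n).
Proof.
  intros Hx Hy.
  pose proof (is_l1_mult_bounded x a Ma Hx Ha) as Hxa.
  pose proof (is_l1_mult_bounded x b Mb Hx Hb) as Hxb.
  pose proof (is_l1_mult_bounded y a Ma Hy Ha) as Hya.
  pose proof (is_l1_mult_bounded y b Mb Hy Hb) as Hyb.
  unfold ab_form, pair, ab_kernel.
  rewrite (Series_ext _ (fun n => (y n * b n) * sum_n (fun m => x m * a m) n +
                                  (y n * a n) * tail (fun m => x m * b m) n))
    by (intros; ring).
  rewrite Series_plus, (Series_abel _ _ Hxa Hyb); [ring|..];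
    apply ex_series_Rabs; eapply is_l1_mult_bounded;
    eauto using sum_n_bounded, tail_bounded.
Qed.

Lemma ab_form_sym x y : is_l1 x -> is_l1 y -> ab_form x y = ab_form y x.
Proof.
  intros Hx Hy. rewrite (ab_form_expand x y), (ab_form_expand y x) by assumption.
  rewrite (Series_ext (fun n => (x n * a n) * (y n * b n)) (fun n => (y n * a n) * (x n * b n)))
    by (intros; ring).
  ring.
Qed.

Lemma ab_form_cont_sym_bilinear : cont_sym_bilinear ab_form.
Proof.
  split; [|split; [|split; [|split; [|split]]]].
  - intros x1 x2 y H1 H2 Hy.
    rewrite !(ab_form_sym _ y) by auto using is_l1_plus.
    eapply pair_plus; eauto using ab_kernel_bounded.
  - intros c x y Hx Hy. rewrite !(ab_form_sym _ y) by auto using is_l1_scal. apply pair_scal.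
  - intros x y1 y2 Hx H1 H2. eapply pair_plus; eauto using ab_kernel_bounded.
  - intros c x y _ _. apply pair_scal.
  - exact ab_form_sym.
  - exists (3 * Ma * Mb). intros x y Hx Hy.
    eapply Rle_trans; [apply (Rabs_pair_le _ _ _ Hy (ab_kernel_bounded x Hx))|].
    right. ring.
Qed.

Lemma c0_perp_ab_kernel z x : in_c0_perp z -> is_l1 x -> z (ab_kernel x) = pair x a * z b.
Proof.
  intros Hz Hx. eapply c0_perp_eval; eauto using ab_kernel_bounded, ab_kernel_sub_is_c0.
Qed.

Lemma ab_form_AB_ext z1 z2 : in_c0_perp z2 -> AB_ext ab_form z1 z2 (z1 a * z2 b).
Proof.
  intros Hz2 I J leI leJ x y _ _ [Hx Hxlim] [_ Hylim].
  exists (fun i => z2 (ab_kernel (x i))). split.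
  - intros i. apply Hylim. exists (3 * Ma * Mb * norm1 (x i)). apply ab_kernel_bounded, Hx.
  - rewrite (functional_extensionality _ (fun i => pair (x i) a * z2 b))
      by (intros i; apply c0_perp_ab_kernel, Hx; exact Hz2).
    apply net_lim_scal_r, Hxlim. exists Ma. exact Ha.
Qed.

End Form.

Theorem lemma2p3 (a b : nat -> R) :
  is_linf a -> is_linf b ->
  exists B : (nat -> R) -> (nat -> R) -> R,
    cont_sym_bilinear B /\
    forall z1 z2 : (nat -> R) -> R,
      is_bidual z1 -> in_c0_perp z2 -> AB_ext B z1 z2 (z1 a * z2 b).
Proof.
  intros [Ma Ha] [Mb Hb].
  exists (ab_form a b). split.
  - exact (ab_form_cont_sym_bilinear a b Ma Mb Ha Hb).
  - intros z1 z2 _ Hz2. exact (ab_form_AB_ext a b Ma Mb Ha Hb z1 z2 Hz2).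
Qed.
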